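(* Let $f$, $Q$, $L$, $d_Q$ and $T\in\mathbb{N}_0$ be as in the context, and let the sequences $(x_t)_{t=0}^{T+1}$, $(u_t)_{t=0}^{T+1}$, $(z_t)_{t=0}^{T}$, $(\hat x_t)_{t=1}^{T+1}$, $(\gamma_t)_{t=0}^{T+1}$, $(\Gamma_t)_{t=0}^{T+1}$, $(\tau_t)_{t=0}^{T}$, $(L_t)_{t=0}^{T}$ be generated by the algorithm described in the context. Then for every $0\le t\le T$, \[ \Gamma_t f(u_t)+\sum_{k=0}^{t-1}(L_{k+1}-L_k)\Big(d_Q(z_{k+1})-\tfrac12\|z_k-\hat x_{k+1}\|^2\Big)\le \psi_t, \] where \[ \psi_t:=\min_{x\in Q}\Big\{\sum_{k=0}^{t}\gamma_k\big(f(x_k)+\langle\nabla f(x_k),x-x_k\rangle\big)+L_t d_Q(x)\Big\}. \]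
   Context: $\mathbb{R}^n$ carries the standard scalar product $\langle\cdot,\cdot\rangle$ and a (possibly different) norm $\|\cdot\|$, with dual norm $\|u\|_*=\max\{\langle u,x\rangle:\|x\|=1\}$. $Q\subseteq\mathbb{R}^n$ is closed and convex; $f:\mathbb{R}^n\to\mathbb{R}$ is convex, differentiable, attains its minimum on $Q$, and $L>0$ satisfies $\|\nabla f(x)-\nabla f(y)\|_*\le L\|x-y\|$ for all $x,y\in Q$. A distance-generating function for $Q$ is $d_Q:Q\to\mathbb{R}_{\ge0}$ that is continuous on $Q$, strongly convex with modulus 1 w.r.t. $\|\cdot\|$ (i.e. $d_Q(\lambda x+(1-\lambda)y)+\frac{\lambda(1-\lambda)}2\|x-y\|^2\le\lambda d_Q(x)+(1-\lambda)d_Q(y)$ for $x,y\in Q$, $\lambda\in[0,1]$), and whose subdifferential admits a continuous selection $d_Q'$ on $Q^o:=\{x\in Q:\partial d_Q(x)\neq\emptyset\}$. For $z\in Q^o$, the Bregman distance is $V_z(x)=d_Q(x)-d_Q(z)-\langle d_Q'(z),x-z\rangle$, and the prox-mapping is $\mathrm{Prox}_{Q,z}(s)=\arg\min_{x\in Q}\{\langle s,x-z\rangle+V_z(x)\}$ (a unique minimizer, lying in $Q^o$). The $d_Q$-center is $c(d_Q)=\arg\min_{x\in Q}d_Q(x)$, and it is assumed that $d_Q(c(d_Q))=0$. Algorithm: choose $T\in\mathbb{N}_0$ and numbers $(\gamma_t)_{t=0}^{T+1}$ with $\gamma_0\in(0,1]$, $\gamma_t\ge0$ and $\gamma_t^2\le\Gamma_t:=\sum_{k=0}^t\gamma_k$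 for all $0\le t\le T+1$. Set $L_0=L$, $x_0=c(d_Q)$, $u_0=\arg\min_{x\in Q}\{\gamma_0(f(x_0)+\langle\nabla f(x_0),x-x_0\rangle)+L_0d_Q(x)\}$, $z_0=u_0$, $\tau_0=\gamma_1/\Gamma_1$, $x_1=\tau_0z_0+(1-\tau_0)u_0(=z_0)$, $\hat x_1=\mathrm{Prox}_{Q,z_0}(\gamma_1\nabla f(x_1)/L_0)$, $u_1=\tau_0\hat x_1+(1-\tau_0)u_0$. For $t=1,\dots,T$: choose $0<L_t\le L$ with $f(u_t)\le f(x_t)+\langle\nabla f(x_t),u_t-x_t\rangle+\frac{L_t}{2}\|u_t-x_t\|^2$; set $z_t=\arg\min_{x\in Q}\{\sum_{k=0}^t\gamma_k(f(x_k)+\langle\nabla f(x_k),x-x_k\rangle)+L_td_Q(x)\}$; set $\tau_t=\gamma_{t+1}/\Gamma_{t+1}$ and $x_{t+1}=\tau_tz_t+(1-\tau_t)u_t$; set $\hat x_{t+1}=\mathrm{Prox}_{Q,z_t}(\gamma_{t+1}\nabla f(x_{t+1})/L_t)$; set $u_{t+1}=\tau_t\hat x_{t+1}+(1-\tau_t)u_t$. *)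

From HB Require Import structures.
From mathcomp Require Import all_boot all_order all_algebra.
From mathcomp Require Import all_classical all_reals all_analysis.
Set Implicit Arguments. Unset Strict Implicit. Unset Printing Implicit Defensive.
Import Order.TTheory GRing.Theory Num.Theory.
Import numFieldNormedType.Exports.
Local Open Scope classical_set_scope.
Local Open Scope ring_scope.

Section Defs.
Variables (R : realType) (n : nat).
Local Notation V := 'rV[R]_n.

Definition sprod (u x : V) : R := \sum_(i < n) u ord0 i * x ord0 i.

Definition is_norm (N : V -> R) : Prop :=
  (forall x, 0 <= N x) /\ (forall x, N x = 0 -> x = 0) /\
  (forall (a : R) x, N (a *: x) = `|a| * N x) /\
  (forall x y, N (x + y) <= N x + N y).

Definition dual_norm (N : V -> R) (u : V) : R :=
  sup [set sprod u x | x in [set x | N x = 1]].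

Definition convex_fun (f : V -> R) : Prop :=
  forall x y (l : R), 0 <= l <= 1 ->
    f (l *: x + (1 - l) *: y) <= l * f x + (1 - l) * f y.

Definition is_gradient (f : V -> R) (g : V -> V) : Prop :=
  forall x, differentiable f x /\ forall v, 'd f x v = sprod (g x) v.

Definition strongly_convex1_on (N : V -> R) (Q : set V) (d : V -> R) : Prop :=
  forall x y (l : R), Q x -> Q y -> 0 <= l <= 1 ->
    d (l *: x + (1 - l) *: y) + l * (1 - l) / 2 * N (x - y) ^+ 2
      <= l * d x + (1 - l) * d y.

Definition subgrad (Q : set V) (d : V -> R) (x s : V) : Prop :=
  forall y, Q y -> d x + sprod s (y - x) <= d y.

Definition Qo (Q : set V) (d : V -> R) : set V :=
  [set x | Q x /\ exists s, subgrad Q d x s].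

Definition dgf (N : V -> R) (Q : set V) (d : V -> R) (d' : V -> V) : Prop :=
  (forall x, Q x -> 0 <= d x) /\
  {within Q, continuous d} /\
  strongly_convex1_on N Q d /\
  (forall x, Qo Q d x -> subgrad Q d x (d' x)) /\
  {within Qo Q d, continuous d'}.

Definition bregman (d : V -> R) (d' : V -> V) (z x : V) : R :=
  d x - d z - sprod (d' z) (x - z).

Definition is_argmin (Q : set V) (phi : V -> R) (p : V) : Prop :=
  Q p /\ forall x, Q x -> phi p <= phi x.

Definition is_prox (Q : set V) (d : V -> R) (d' : V -> V) (z s p : V) : Prop :=
  is_argmin Q (fun x => sprod s (x - z) + bregman d d' z x) p.

Definition Gam (gamma : nat -> R) (t : nat) : R := \sum_(k < t.+1) gamma k.

Definition model (f : V -> R) (g : V -> V) (d : V -> R) (gamma : nat -> R)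
  (xs : nat -> V) (Lt : nat -> R) (t : nat) (x : V) : R :=
  \sum_(k < t.+1) gamma k * (f (xs k) + sprod (g (xs k)) (x - xs k)) + Lt t * d x.

Definition psi (Q : set V) (f : V -> R) (g : V -> V) (d : V -> R) (gamma : nat -> R)
  (xs : nat -> V) (Lt : nat -> R) (t : nat) : R :=
  inf [set model f g d gamma xs Lt t x | x in Q].

End Defs.

From HB Require Import structures.
From mathcomp Require Import all_boot all_order all_algebra.
From mathcomp Require Import all_classical all_reals all_analysis.
From mathcomp Require Import ring lra.
Import Order.TTheory GRing.Theory Num.Theory.
Import numFieldNormedType.Exports.
Local Open Scope classical_set_scope.
Local Open Scope ring_scope.

(* The estimate is proved by induction on [t], using [psi_t = model_t (z_t)].  In the step,
   convexity of [f] and the test defining [L_{t+1}] bound [f (u_{t+1})] through the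
   linearization at [x_{t+1}]; since [x_{t+1}] and [u_{t+1}] are the same convex combinations
   of [z_t] and [xh_{t+1}] with [u_t], and [gamma_{t+1}^2 <= Gamma_{t+1}], this reduces to the
   prox inequality at [xh_{t+1}], which the three-point property
   [model_t y >= model_t z_t + L_t V_{z_t}(y)] and [V_z(y) >= |y - z|^2 / 2] close.
   The three-point property needs [d' z_t] to be the subgradient given by optimality of [z_t];
   this follows from monotonicity of the subdifferential and continuity of [d'], approaching
   [z_t] by prox points, which lie in [Qo].  The base case is the descent lemma, obtained by
   summing the first-order convexity inequality along a fine partition of a segment. *)

Lemma le_of_forall_sub_mul_le {R : realFieldType} {a b K : R} : 0 <= K ->
  (forall t, 0 < t <= 1 -> b - t * K <= a) -> b <= a.
Proof.
move=> K0 H; rewrite leNgt; apply/negP => ab.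
have [Kz|Kn0] := eqVneq K 0.
  by have := H 1; rewrite Kz mulr0 subr0 ltr01 lexx => /(_ isT); rewrite leNgt ab.
have Kp : 0 < K by rewrite lt_def Kn0 K0.
pose t := Num.min 1 ((b - a) / (2 * K)).
have t0 : 0 < t by rewrite lt_min ltr01 /= divr_gt0 ?subr_gt0 // mulr_gt0.
have t1 : t <= 1 by rewrite ge_min lexx.
have tK : t * K <= (b - a) / 2.
  have -> : (b - a) / 2 = (b - a) / (2 * K) * K by field; rewrite gt_eqF.
  by rewrite ler_pM2r // ge_min lexx orbT.
by have := H t; rewrite t0 t1 => /(_ isT); lra.
Qed.

Lemma le_of_forall_add_div_le {R : realType} {a b} (K : R) : 0 <= K ->
  (forall m : nat, a <= b + K / m.+1%:R) -> a <= b.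
Proof.
move=> K0 H; apply/ler_addgt0Pr => e e0.
pose m := Num.Def.archi_bound (K / e).
have Km : K / e < m%:R := archi_boundP (divr_ge0 K0 (ltW e0)).
apply: (le_trans (H m)); rewrite lerD2l ler_pdivrMr ?ltr0Sn //.
have : K < m%:R * e by rewrite -ltr_pdivrMr.
rewrite -natr1; nra.
Qed.

Section ScalarProduct.
Context {R : realType} {n : nat}.
Local Notation V := 'rV[R]_n.
Implicit Types u v w x y : V.

Lemma sprodC u x : sprod u x = sprod x u.
Proof. by apply: eq_bigr => i _; rewrite mulrC. Qed.

Lemma sprodDl u v x : sprod (u + v) x = sprod u x + sprod v x.
Proof. by rewrite /sprod -big_split; apply: eq_bigr => i _; rewrite mxE mulrDl. Qed.

Lemma sprodDr u x y : sprod u (x + y) = sprod u x + sprod u y.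
Proof. by rewrite sprodC sprodDl !(sprodC u). Qed.

Lemma sprodZl a u x : sprod (a *: u) x = a * sprod u x.
Proof. by rewrite /sprod mulr_sumr; apply: eq_bigr => i _; rewrite mxE mulrA. Qed.

Lemma sprodZr a u x : sprod u (a *: x) = a * sprod u x.
Proof. by rewrite sprodC sprodZl sprodC. Qed.

Lemma sprodNl u x : sprod (- u) x = - sprod u x.
Proof. by rewrite -scaleN1r sprodZl mulN1r. Qed.

Lemma sprodNr u x : sprod u (- x) = - sprod u x.
Proof. by rewrite -scaleN1r sprodZr mulN1r. Qed.

Lemma sprodBl u v x : sprod (u - v) x = sprod u x - sprod v x.
Proof. by rewrite sprodDl sprodNl. Qed.

Lemma sprodBr u x y : sprod u (x - y) = sprod u x - sprod u y.
Proof. by rewrite sprodDr sprodNr. Qed.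

Lemma sprod0l u : sprod 0 u = 0.
Proof. by rewrite -(scale0r (0 : V)) sprodZl mul0r. Qed.

Lemma sprod_suml I (r : seq I) (P : pred I) (F : I -> V) x :
  sprod (\sum_(i <- r | P i) F i) x = \sum_(i <- r | P i) sprod (F i) x.
Proof. by elim/big_rec2: _ => [|i a b _ <-]; rewrite ?sprod0l ?sprodDl. Qed.

Lemma sprod_ge0 u : 0 <= sprod u u.
Proof. by apply: sumr_ge0 => i _; rewrite -expr2 sqr_ge0. Qed.

Lemma sprodD_sqr (a h : V) (t : R) :
  sprod (a + t *: h) (a + t *: h) = sprod a a + 2 * t * sprod a h + t ^+ 2 * sprod h h.
Proof. by rewrite !sprodDl !sprodDr !sprodZl !sprodZr (sprodC h a); ring. Qed.

Lemma mx_norm_coord_le u (i : 'I_n) : `|u ord0 i| <= `|u|.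
Proof.
rewrite [leRHS](_ : _ = mx_norm u) // mx_normrE; apply/bigmax_geP; right => /=.
by exists (ord0, i).
Qed.

Lemma normr_sprod_le u v : `|sprod u v| <= n%:R * `|u| * `|v|.
Proof.
rewrite (le_trans (ler_norm_sum _ _ _)) // -mulrA.
apply: (@le_trans _ _ (\sum_(i < n) `|u| * `|v|)).
  by apply: ler_sum => i _; rewrite normrM ler_pM ?mx_norm_coord_le.
by rewrite sumr_const card_ord mulr_natl.
Qed.

Lemma mx_norm_sqr_le_sprod u : `|u| ^+ 2 <= sprod u u.
Proof.
rewrite (_ : `|u| = mx_norm u) //.
have [->|] := eqVneq (mx_norm u) 0; first by rewrite expr0n sprod_ge0.
move=> /mx_norm_neq0[[i j] /= ->].
rewrite (ord1 i) /sprod (bigD1 j) //= -[leLHS]addr0 real_normK ?num_real //.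
by rewrite expr2 lerD2l sumr_ge0 // => k _; rewrite -expr2 sqr_ge0.
Qed.

Lemma continuous_sprod_sqr w : continuous (fun x => sprod (x - w) (x - w)).
Proof.
apply: continuous_big => [|i _ x]; first exact: add_continuous.
have cx : {for x, continuous (fun y : V => (y - w) ord0 i)}.
  have -> : (fun y : V => (y - w) ord0 i) = fun y => y ord0 i - w ord0 i.
    by apply: funext => y; rewrite !mxE.
  by apply: continuousB; [exact: coord_continuous | exact: cst_continuous].
exact: continuousM.
Qed.

End ScalarProduct.

Section Norm.
Context {R : realType} {n : nat} {N : 'rV[R]_n -> R}.
Hypothesis normN : is_norm N.
Local Notation V := 'rV[R]_n.
Implicit Types u v x y : V.

Lemma normN_ge0 x : 0 <= N x.
Proof. by have [->] := normN. Qed.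

Lemma normN_eq0 x : N x = 0 -> x = 0.
Proof. by have [_ [+ _]] := normN; apply. Qed.

Lemma normNZ (a : R) x : N (a *: x) = `|a| * N x.
Proof. by have [_ [_ [->]]] := normN. Qed.

Lemma normND x y : N (x + y) <= N x + N y.
Proof. by have [_ [_ [_ ->]]] := normN. Qed.

Lemma normN_distC x y : N (x - y) = N (y - x).
Proof. by rewrite -opprB -scaleN1r normNZ normrN normr1 mul1r. Qed.

Lemma normN_sum_le I (r : seq I) (P : pred I) (F : I -> V) :
  N (\sum_(i <- r | P i) F i) <= \sum_(i <- r | P i) N (F i).
Proof.
elim/big_rec2: _ => [|i a b _ h]; last by rewrite (le_trans (normND _ _)) // lerD2l.
by rewrite -(scale0r (0 : V)) normNZ normr0 mul0r.
Qed.

Lemma normN_le_mx_norm : exists2 K, 0 <= K & forall v, N v <= K * `|v|.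
Proof.
exists (\sum_(j < n) N 'e_j); first by apply: sumr_ge0 => j _; exact: normN_ge0.
move=> v; rewrite {1}(row_sum_delta v) (le_trans (normN_sum_le _ _ _ _)) //.
rewrite mulr_suml; apply: ler_sum => j _; rewrite normNZ mulrC ler_wpM2l //.
  exact: normN_ge0.
exact: mx_norm_coord_le.
Qed.

Lemma normN_dist_le x y : `|N x - N y| <= N (x - y).
Proof.
rewrite ler_norml; apply/andP; split.
- by have := normND (y - x) x; rewrite subrK normN_distC; lra.
- by have := normND (x - y) y; rewrite subrK; lra.
Qed.

Lemma normN_continuous : continuous N.
Proof.
move=> x; have [K K0 NK] := normN_le_mx_norm.
have K1 : 0 < K + 1 by rewrite ltr_wpDl.
apply/(@cvgrPdist_lt _ _ _ (nbhs x) (nbhs_filter x)) => e e0.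
have : \forall y \near x, `|x - y| < e / (K + 1).
  by apply: (@cvgr_dist_lt _ _ _ (nbhs x) _ id x cvg_id); rewrite divr_gt0.
apply: filterS => y xy; rewrite (le_lt_trans (normN_dist_le _ _)) //.
rewrite (le_lt_trans (NK _)) // (@le_lt_trans _ _ ((K + 1) * `|x - y|)) //.
  by rewrite ler_wpM2r // lerDl.
by rewrite mulrC -ltr_pdivlMr.
Qed.

(* The max-norm unit sphere is compact, so N attains a positive minimum on it. *)
Lemma mx_norm_le_normN : exists2 M, 0 < M & forall x, `|x| <= M * N x.
Proof.
pose S := [set x : V | `|x| = 1].
have S_normalize x : x != 0 -> S (`|x|^-1 *: x).
  by move=> x0; rewrite /S /= normrZ normfV normr_id mulVf // normr_eq0.
have [S0|/set0P[x0 Sx0]] := eqVneq S set0.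
  exists 1 => // x; rewrite mul1r; have [->|xn0] := eqVneq x 0.
    by rewrite normr0 normN_ge0.
  by have := S_normalize x xn0; rewrite S0.
have cS : compact S.
  apply: bounded_closed_compact.
    by exists 1; split; [exact: num_real | move=> M M1 x /= ->; rewrite ltW].
  apply: (@preimage_closed _ _ (fun x : V => `|x|) [set 1]); last exact: closed_eq.
  by move=> x _; exact: norm_continuous.
have [c /set_mem Sc cmin] := @compact_EVT_min _ _ N S (ex_intro _ x0 Sx0) cS
  (continuous_subspaceT normN_continuous).
have Nc : 0 < N c.
  rewrite lt_def normN_ge0 andbT; apply/eqP => /normN_eq0 c0.
  by move: Sc; rewrite /S /= c0 normr0 => /eqP; rewrite eq_sym oner_eq0.
exists (N c)^-1; first by rewrite invr_gt0.
move=> x; have [->|xn0] := eqVneq x 0.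
  by rewrite normr0 mulr_ge0 ?invr_ge0 ?normN_ge0.
have := cmin _ (mem_set (S_normalize x xn0)); rewrite normNZ normfV normr_id.
have nx : 0 < `|x| by rewrite normr_gt0.
rewrite -(ler_pM2l nx) mulrA mulfV ?gt_eqF // mul1r => h.
by rewrite -(ler_pM2l Nc) mulrA mulfV ?gt_eqF // mul1r mulrC.
Qed.

Lemma sprod_le_dual_norm u v : sprod u v <= dual_norm N u * N v.
Proof.
have [Nv0|Nvn0] := eqVneq (N v) 0.
  by rewrite Nv0 mulr0 (normN_eq0 _ Nv0) sprodC sprod0l.
have Nv : 0 < N v by rewrite lt_def Nvn0 normN_ge0.
have [M M0 xM] := mx_norm_le_normN.
set E := [set sprod u x | x in [set x | N x = 1]].
have Ev : E (sprod u ((N v)^-1 *: v)).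
  exists ((N v)^-1 *: v) => //=.
  by rewrite normNZ ger0_norm ?invr_ge0 ?normN_ge0 // mulVf.
have Ebounded : has_ubound E.
  exists (n%:R * `|u| * M) => _ [x /= Nx <-].
  rewrite (le_trans (ler_norm _)) // (le_trans (normr_sprod_le _ _)) //.
  by rewrite ler_wpM2l ?mulr_ge0 // (le_trans (xM x)) // Nx mulr1.
have := ub_le_sup Ebounded Ev; rewrite sprodZr.
rewrite -(ler_pM2r Nv) mulrAC mulVf ?gt_eqF // mul1r; apply.
Qed.

End Norm.

Section ConvexAnalysis.
Context {R : realType} {n : nat}.
Local Notation V := 'rV[R]_n.
Implicit Types (Q : set V) (N d f : V -> R) (g : V -> V) (s u v x y z : V).

Lemma convex_set_comb {Q x y} {l : R} : convex_set Q ->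
  Q x -> Q y -> 0 <= l <= 1 -> Q (l *: x + (1 - l) *: y).
Proof.
move=> cQ Qx Qy /andP[l0 l1].
by have := cQ x y (Itv01 l0 l1); rewrite !inE => /(_ Qx Qy).
Qed.

Lemma convex_gradient_le {f g} x y : convex_fun f -> is_gradient f g ->
  f x + sprod (g x) (y - x) <= f y.
Proof.
move=> cf hg; have [df dfE] := hg x; set v := y - x.
have dv : derivable f x v by exact: diff_derivable.
pose q h := h^-1 *: ((f \o shift x) (h *: v) - f x).
have qr : q @ 0^'+ --> 'D_v f x.
  move=> A /dv /nbhs_ballP[_ /posnumP[e] eA]; apply/nbhs_ballP.
  by exists e%:num => //= h eh h0; apply: eA => //; rewrite gt_eqF.
suff : 'D_v f x <= f y - f x by rewrite deriveE // dfE; lra.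
rewrite -(cvg_lim _ qr) //; apply: limr_le; first by apply/cvg_ex; exists ('D_v f x).
near=> h; rewrite /q /= /GRing.scale /= (_ : scalemx h v = h *: v) //.
have h0 : 0 < h by near: h; exact: nbhs_right_gt.
have h1 : h <= 1 by near: h; exact: nbhs_right_le.
have := cf y x h; rewrite h1 ltW //= => /(_ isT).
rewrite (_ : h *: y + (1 - h) *: x = h *: v + x); last first.
  by rewrite /v scalerBr scalerBl scale1r addrCA addrC.
move=> cvx.
by rewrite -(ler_pM2l h0) mulrA mulfV ?gt_eqF // mul1r; nra.
Unshelve. all: by end_near. Qed.

Lemma sprod_lipschitz_gradient_le {N Q g} {L : R} x y v : is_norm N ->
  (forall x y, Q x -> Q y -> dual_norm N (g x - g y) <= L * N (x - y)) ->
  Q x -> Q y -> sprod (g y) v <= sprod (g x) v + L * N (y - x) * N v.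
Proof.
move=> normN Lip Qx Qy; rewrite -lerBlDl -sprodBl.
rewrite (le_trans (sprod_le_dual_norm normN _ _)) // ler_wpM2r ?normN_ge0 //.
exact: Lip.
Qed.

(* Summing the first-order convexity inequality along the partition
   x + (k / r) (y - x), k <= r, of [x, y] gives the bound with L / 2 up to O(1 / r). *)
Lemma lipschitz_gradient_le {N Q f g} {L : R} {x y} : is_norm N -> convex_set Q ->
  convex_fun f -> is_gradient f g -> 0 <= L ->
  (forall x y, Q x -> Q y -> dual_norm N (g x - g y) <= L * N (x - y)) ->
  Q x -> Q y -> f y <= f x + sprod (g x) (y - x) + L / 2 * N (y - x) ^+ 2.
Proof.
move=> normN cQ cf hg L0 Lip Qx Qy.
set v := y - x; set S := sprod (g x) v; set M := N v ^+ 2.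
have M0 : 0 <= M by rewrite sqr_ge0.
apply: (le_of_forall_add_div_le (L * M / 2)).
  by apply: divr_ge0 => //; exact: mulr_ge0.
move=> m; set r : R := m.+1%:R; have r0 : 0 < r by rewrite ltr0Sn.
pose p (k : nat) := x + (k%:R / r) *: v.
have Qp k : (k <= m.+1)%N -> Q (p k).
  move=> km; rewrite (_ : p k = (k%:R / r) *: y + (1 - k%:R / r) *: x); last first.
    by rewrite /p /v scalerBr scalerBl scale1r addrCA addrC.
  apply: convex_set_comb => //; rewrite divr_ge0 ?ler0n ?(ltW r0) //=.
  by rewrite ler_pdivrMr // mul1r ler_nat.
have partial k : (k <= m.+1)%N ->
    f (p k) <= f x + k%:R / r * S + L * M * (k%:R * (k%:R + 1)) / (2 * r ^+ 2).
  elim: k => [|k IH] km; first by rewrite /p !mul0r scale0r addr0 mulr0 mul0r !addr0.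
  have cvx := convex_gradient_le (p k.+1) (p k) cf hg.
  have pk : p k - p k.+1 = - (r^-1 *: v).
    by apply/rowP => i; rewrite /p !mxE -natr1; field; rewrite gt_eqF.
  rewrite pk sprodNr sprodZr in cvx.
  have lip := sprod_lipschitz_gradient_le x (p k.+1) v normN Lip Qx (Qp _ km).
  rewrite /p addrAC subrr add0r (normNZ normN) ger0_norm ?divr_ge0 ?ler0n ?(ltW r0) // in lip.
  have {}lip : r^-1 * sprod (g (p k.+1)) v <= r^-1 * (S + L * (k.+1%:R / r * N v) * N v).
    by rewrite ler_wpM2l ?invr_ge0 ?(ltW r0).
  have IHk := IH (ltnW km).
  rewrite (_ : _ + _ / (2 * r ^+ 2) = f x + k%:R / r * S
      + L * M * (k%:R * (k%:R + 1)) / (2 * r ^+ 2)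
      + r^-1 * (S + L * (k.+1%:R / r * N v) * N v)); last first.
    by rewrite /M -!natr1; field; rewrite gt_eqF.
  move: cvx lip IHk; set a := r^-1 * _; set b := r^-1 * _; set c := f x + _ + _.
  lra.
have := partial m.+1 (leqnn _).
rewrite (_ : p m.+1 = y); last by rewrite /p divff ?gt_eqF // scale1r /v addrC subrK.
rewrite -/r divff ?gt_eqF // mul1r (_ : L * M * (r * (r + 1)) / (2 * r ^+ 2)
  = L / 2 * M + L * M / 2 / r); last by field; rewrite gt_eqF.
by rewrite addrA.
Qed.

Lemma subgrad_strongly_convex_le {N Q d z s x} : convex_set Q ->
  strongly_convex1_on N Q d -> Q z -> subgrad Q d z s -> Q x ->
  d z + sprod s (x - z) + 2^-1 * N (x - z) ^+ 2 <= d x.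
Proof.
move=> cQ sc Qz sz Qx; set M := N (x - z) ^+ 2.
have M0 : 0 <= 2^-1 * M by rewrite mulr_ge0 ?sqr_ge0.
apply: (le_of_forall_sub_mul_le M0) => l /andP[l0 l1].
have l01 : 0 <= l <= 1 by rewrite ltW.
have scl := sc x z l Qx Qz l01.
have := sz _ (convex_set_comb cQ Qx Qz l01).
rewrite (_ : l *: x + (1 - l) *: z - z = l *: (x - z)); last first.
  by apply/rowP => i; rewrite !mxE; ring.
rewrite sprodZr => szl.
suff : l * (sprod s (x - z) + (1 - l) / 2 * M) <= l * (d x - d z).
  by rewrite ler_pM2l //; lra.
rewrite -/M in scl; lra.
Qed.

Lemma bregman_ge_half_sqr {N Q d} {d' : V -> V} {z x} : convex_set Q ->
  strongly_convex1_on N Q d -> Q z -> subgrad Q d z (d' z) -> Q x ->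
  2^-1 * N (x - z) ^+ 2 <= bregman d d' z x.
Proof.
by move=> cQ sc Qz sz Qx; have := subgrad_strongly_convex_le cQ sc Qz sz Qx; rewrite /bregman; lra.
Qed.

Lemma subgrad_monotone {Q d x z sx sz} : Q x -> Q z ->
  subgrad Q d x sx -> subgrad Q d z sz -> 0 <= sprod (sx - sz) (x - z).
Proof.
move=> Qx Qz sgx sgz; have := sgx z Qz; have := sgz x Qx.
by rewrite sprodBl -[z - x]opprB sprodNr; lra.
Qed.

End ConvexAnalysis.

Lemma continuous_within_dist_lt {R : realType} {n : nat} {A : set 'rV[R]_n}
    {F : 'rV[R]_n -> 'rV[R]_n} {z eps} :
  {within A, continuous F} -> A z -> 0 < eps ->
  exists2 eta, 0 < eta & forall x, A x -> `|z - x| < eta -> `|F z - F x| < eps.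
Proof.
move=> cF Az e0.
have : F @ within A (nbhs z) --> F z by rewrite nbhs_subspace_in //; exact: cF.
move/cvgrPdist_lt => /(_ eps e0); rewrite near_withinE => /nbhs_ballP[eta eta0 zF].
by exists eta => // x Ax zx; apply: zF => //; rewrite mx_norm_ball.
Qed.

Definition prox_objective {R : realType} {n : nat} (d : 'rV[R]_n -> R) (lam : R)
  (w x : 'rV[R]_n) : R := d x + (2 * lam)^-1 * sprod (x - w) (x - w).

Section Prox.
Context {R : realType} {n : nat}.
Local Notation V := 'rV[R]_n.
Context {N : V -> R} {Q : set V} {d : V -> R} {d' : V -> V}.
Hypotheses (closedQ : closed Q) (convexQ : convex_set Q) (dgfQ : dgf N Q d d').
Implicit Types (u v w x y z : V).

Lemma dgf_ge0 {x} : Q x -> 0 <= d x.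
Proof. by have [+ _] := dgfQ; apply. Qed.

Lemma dgf_convex {x y} {l : R} : Q x -> Q y -> 0 <= l <= 1 ->
  d (l *: x + (1 - l) *: y) <= l * d x + (1 - l) * d y.
Proof.
have [_ [_ [sc _]]] := dgfQ => Qx Qy l01; have := sc x y l Qx Qy l01.
have : 0 <= l * (1 - l) / 2 * N (x - y) ^+ 2.
  by case/andP: l01 => l0 l1; rewrite mulr_ge0 ?sqr_ge0 // divr_ge0 // mulr_ge0 ?subr_ge0.
lra.
Qed.

Lemma dgf_selection_subgrad {x} : Qo Q d x -> subgrad Q d x (d' x).
Proof. by have [_ [_ [_ [+ _]]]] := dgfQ; apply. Qed.

(* Minimize over a bounded closed piece of Q; outside it the penalty alone exceeds [d w]. *)
Lemma prox_objective_argmin_exists {w} {lam : R} : Q w -> 0 < lam ->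
  exists c, is_argmin Q (prox_objective d lam w) c.
Proof.
move=> Qw lam0; have [_ [cd _]] := dgfQ; set G := prox_objective d lam w.
pose rho := 1 + 2 * lam * d w.
have rho1 : 1 <= rho by rewrite lerDl mulr_ge0 ?dgf_ge0 // mulr_ge0 // ltW.
pose A := Q `&` [set x | `|w - x| <= rho].
have AQ : A `<=` Q by move=> x [].
have Aw : A w by split => //=; rewrite subrr normr0 (le_trans ler01).
have cA : compact A.
  apply: bounded_closed_compact.
    exists (`|w| + rho); split; first exact: num_real.
    move=> M hM x [_ /= wx]; apply: (le_trans _ (ltW hM)).
    by rewrite -[x](subKr w) (le_trans (ler_normB _ _)) // lerD2l.
  apply: closedI => //; rewrite (_ : [set x | _] = closed_ball w rho).
    exact: closed_ball_closed.
  by rewrite closed_ballE // (lt_le_trans ltr01).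
have cG : {within A, continuous G}.
  have cpen : continuous (fun x => (2 * lam)^-1 * sprod (x - w) (x - w)).
    move=> y; have cst : {for y, continuous (fun=> (2 * lam)^-1 : R)} by exact: cst_continuous.
    exact: continuousM cst (continuous_sprod_sqr w y).
  move=> x; apply: cvgD; first exact: continuous_subspaceW AQ cd x.
  exact: continuous_subspaceT cpen x.
have [c /set_mem Ac cmin] := compact_EVT_min (ex_intro _ w Aw) cA cG.
have Gcw : G c <= G w by apply: cmin; rewrite inE.
exists c; split => [|x Qx]; first exact: AQ.
have [wx|wx] := leP `|w - x| rho; first by apply: cmin; rewrite inE.
apply: (le_trans Gcw); rewrite /G /prox_objective subrr sprod0l mulr0 addr0.
have xw : rho ^+ 2 < sprod (x - w) (x - w).
  apply: lt_le_trans (mx_norm_sqr_le_sprod _); rewrite distrC in wx.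
  by rewrite ltr_pXn2r ?nnegrE ?normr_ge0 ?(le_trans ler01).
have : 2 * lam * d w < sprod (x - w) (x - w).
  by apply: le_lt_trans xw; move: rho1; rewrite /rho expr2; nra.
rewrite -(ltr_pM2l (_ : 0 < (2 * lam)^-1)) ?invr_gt0 ?mulr_gt0 //.
rewrite mulrA mulVf ?gt_eqF ?mulr_gt0 // mul1r; have := dgf_ge0 Qx; lra.
Qed.

Lemma prox_objective_argmin_subgrad {w} {lam : R} {c} : 0 < lam ->
  is_argmin Q (prox_objective d lam w) c -> subgrad Q d c (lam^-1 *: (w - c)).
Proof.
move=> lam0 [Qc cmin] y Qy; set h := y - c.
have K0 : 0 <= (2 * lam)^-1 * sprod h h.
  by rewrite mulr_ge0 ?sprod_ge0 // invr_ge0 mulr_ge0 // ltW.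
apply: (le_of_forall_sub_mul_le K0) => t /andP[t0 t1].
have t01 : 0 <= t <= 1 by rewrite ltW.
have Gt := cmin _ (convex_set_comb convexQ Qy Qc t01).
have dt := dgf_convex Qy Qc t01.
rewrite /prox_objective (_ : t *: y + (1 - t) *: c - w = (c - w) + t *: h) in Gt; last first.
  by apply/rowP => i; rewrite !mxE; ring.
rewrite sprodD_sqr in Gt; rewrite sprodZl -[w - c]opprB sprodNl mulrN.
set s0 := sprod (c - w) (c - w) in Gt; set s1 := sprod (c - w) h in Gt *.
set s2 := sprod h h in Gt K0 *; set D := d (t *: y + (1 - t) *: c) in Gt dt.
have : 0 <= t * (d y - d c + lam^-1 * s1 + t * ((2 * lam)^-1 * s2)).
  rewrite (_ : t * _ = (t * d y + (1 - t) * d c - D)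
    + (D + (2 * lam)^-1 * (s0 + 2 * t * s1 + t ^+ 2 * s2) - (d c + (2 * lam)^-1 * s0))).
    by rewrite addr_ge0 // subr_ge0.
  by field; rewrite gt_eqF.
rewrite pmulr_rge0 //; lra.
Qed.

Lemma prox_objective_argmin_dist {w} {lam : R} {c} : 0 < lam ->
  is_argmin Q (prox_objective d lam w) c -> Q w -> sprod (c - w) (c - w) <= 2 * lam * d w.
Proof.
move=> lam0 [Qc cmin] Qw; have := cmin w Qw.
rewrite /prox_objective subrr sprod0l mulr0 addr0 => Gcw.
rewrite -(ler_pM2l (_ : 0 < (2 * lam)^-1)) ?invr_gt0 ?mulr_gt0 //.
rewrite mulrA mulVf ?gt_eqF ?mulr_gt0 // mul1r; have := dgf_ge0 Qc; lra.
Qed.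

(* Prox points of [z + s (y - z)] with parameter [s^3] lie in [Qo] and, for small [s],
   follow the direction [y - z] up to [o(s)]. *)
Lemma Qo_approx_direction {z y} {eta eps : R} : Q z -> Q y -> 0 < eta -> 0 < eps ->
  exists x s, [/\ Qo Q d x, 0 < s, `|z - x| < eta & `|x - z - s *: (y - z)| <= eps * s].
Proof.
move=> Qz Qy eta0 eps0; set D := d z + d y; set Y := `|y - z|.
have D0 : 0 <= D by rewrite addr_ge0 ?dgf_ge0.
have Y0 : 0 <= Y := normr_ge0 _.
pose s := Num.min 1 (Num.min (eps ^+ 2 / (2 * D + 1)) (eta / (Y + eps + 1))).
have D1 : 0 < 2 * D + 1 by rewrite ltr_wpDl ?mulr_ge0.
have Y1 : 0 < Y + eps + 1 by rewrite ltr_wpDl // addr_ge0 // ltW.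
have s0 : 0 < s by rewrite !lt_min ltr01 !divr_gt0 ?exprn_gt0.
have s01 : 0 <= s <= 1 by rewrite ltW //= ge_min lexx.
have sD : s * (2 * D + 1) <= eps ^+ 2.
  by rewrite -ler_pdivlMr // !ge_min lexx orbT.
have sY : s * (Y + eps + 1) <= eta.
  by rewrite -ler_pdivlMr // !ge_min lexx !orbT.
pose w := s *: y + (1 - s) *: z.
have Qw : Q w := convex_set_comb convexQ Qy Qz s01.
have dw : d w <= D.
  have := dgf_convex Qy Qz s01; have := dgf_ge0 Qy; have := dgf_ge0 Qz.
  by case/andP: s01; rewrite /D; nra.
have [x xmin] := prox_objective_argmin_exists Qw (exprn_gt0 3 s0).
have Qx : Q x by case: xmin.
have s3 : 0 < s ^+ 3 := exprn_gt0 3 s0.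
have xw2 : `|x - w| ^+ 2 <= s ^+ 2 * (2 * s * D).
  apply: le_trans (mx_norm_sqr_le_sprod _) _.
  apply: le_trans (prox_objective_argmin_dist s3 xmin Qw) _.
  rewrite (_ : s ^+ 2 * _ = 2 * s ^+ 3 * D); last by ring.
  by rewrite ler_wpM2l // mulr_ge0 // ltW.
have xw : `|x - w| <= eps * s.
  have : s ^+ 2 * (2 * s * D) <= (eps * s) ^+ 2.
    by rewrite exprMn mulrC ler_wpM2r ?sqr_ge0 //; move: sD; nra.
  by move=> /(le_trans xw2); have := normr_ge0 (x - w); have := mulr_gt0 eps0 s0; nra.
exists x, s; rewrite (_ : x - z - s *: (y - z) = x - w); last first.
  by apply/rowP => i; rewrite !mxE; ring.
split => //.
  by split => //; exists ((s ^+ 3)^-1 *: (w - x)); exact: prox_objective_argmin_subgrad.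
rewrite distrC (_ : x - z = (x - w) + s *: (y - z)); last first.
  by apply/rowP => i; rewrite !mxE; ring.
rewrite (le_lt_trans (ler_normD _ _)) // normrZ ger0_norm ?ltW // -/Y.
by move: sY; nra.
Qed.

(* Apply monotonicity of the subdifferential to [z] and the nearby points of [Qo] given by
   [Qo_approx_direction], then use continuity of [d'] at [z]. *)
Lemma dgf_selection_optimal {z s y} : Q z -> subgrad Q d z s -> Q y ->
  0 <= sprod (d' z - s) (y - z).
Proof.
move=> Qz sz Qy; have Qoz : Qo Q d z by split => //; exists s.
have [_ [_ [_ [_ cd']]]] := dgfQ.
set a := sprod _ _; set Y := `|y - z|; set B := `|d' z - s|.
have K0 : 0 <= n%:R * (Y + 1 + B) by rewrite mulr_ge0 // !addr_ge0 ?normr_ge0.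
apply: (le_of_forall_sub_mul_le K0) => t /andP[t0 t1]; rewrite sub0r.
have [eta eta0 near_z] := continuous_within_dist_lt cd' Qoz t0.
have [x [r [Qox r0 zx xr]]] := Qo_approx_direction Qz Qy eta0 t0.
have dx : `|d' x - d' z| <= t by rewrite distrC ltW // near_z.
set e := x - z - r *: (y - z) in xr.
have := subgrad_monotone Qox.1 Qz (dgf_selection_subgrad Qox) sz.
rewrite (_ : x - z = r *: (y - z) + e); last by rewrite /e [RHS]addrC subrK.
rewrite sprodDr sprodZr => mono.
have dir : sprod (d' x - s) (y - z) <= a + n%:R * t * Y.
  rewrite (_ : d' x - s = (d' z - s) + (d' x - d' z)); last first.
    by apply/rowP => i; rewrite !mxE; ring.
  rewrite sprodDl lerD2l (le_trans (ler_norm _)) // (le_trans (normr_sprod_le _ _)) //.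
  by rewrite -/Y ler_wpM2r ?normr_ge0 // ler_wpM2l.
have err : sprod (d' x - s) e <= n%:R * (1 + B) * (t * r).
  rewrite (le_trans (ler_norm _)) // (le_trans (normr_sprod_le _ _)) //.
  rewrite -!mulrA ler_wpM2l // ler_pM ?normr_ge0 //.
  rewrite (_ : d' x - s = (d' x - d' z) + (d' z - s)); last first.
    by apply/rowP => i; rewrite !mxE; ring.
  by rewrite (le_trans (ler_normD _ _)) // -/B lerD2r (le_trans dx).
have dir' : r * sprod (d' x - s) (y - z) <= r * (a + n%:R * t * Y).
  by rewrite ler_wpM2l // ltW.
suff : 0 <= r * (a + t * (n%:R * (Y + 1 + B))) by rewrite pmulr_rge0 //; lra.
rewrite (_ : r * (a + t * _) = r * (a + n%:R * t * Y) + n%:R * (1 + B) * (t * r)); last by ring.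
move: mono err dir'; set u := r * sprod _ (y - z); set v := sprod _ e.
set p := r * (a + _); set q := _ * (t * r); lra.
Qed.

Lemma argmin_subgrad {phi} {l : V} {L : R} {z} : 0 < L ->
  (forall y, phi y - phi z = sprod l (y - z) + L * (d y - d z)) ->
  is_argmin Q phi z -> subgrad Q d z (- L^-1 *: l).
Proof.
move=> L0 phiE [Qz zmin] y Qy; have := zmin y Qy; rewrite -subr_ge0 phiE => h.
rewrite sprodZl mulNr -(ler_pM2l L0) mulrDr mulrN mulrA mulfV ?gt_eqF // mul1r.
lra.
Qed.

Lemma argmin_bregman_le {phi} {l : V} {L : R} {z y} : 0 < L ->
  (forall y, phi y - phi z = sprod l (y - z) + L * (d y - d z)) ->
  is_argmin Q phi z -> Q y -> L * bregman d d' z y <= phi y - phi z.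
Proof.
move=> L0 phiE zmin Qy; have sz := argmin_subgrad L0 phiE zmin.
have := dgf_selection_optimal zmin.1 sz Qy.
rewrite phiE sprodBl sprodZl mulNr opprK /bregman -(ler_pM2l L0) mulr0.
rewrite mulrDr mulrA mulfV ?gt_eqF // mul1r; lra.
Qed.

End Prox.

Section Model.
Context {R : realType} {n : nat}.
Local Notation V := 'rV[R]_n.
Variables (f : V -> R) (g : V -> V) (d : V -> R) (gamma : nat -> R)
  (xs : nat -> V) (Lt : nat -> R).
Local Notation model := (model f g d gamma xs Lt).

Lemma GamS t : Gam gamma t.+1 = Gam gamma t + gamma t.+1.
Proof. by rewrite /Gam big_ord_recr. Qed.

Lemma modelS t y : model t.+1 y = model t y
  + gamma t.+1 * (f (xs t.+1) + sprod (g (xs t.+1)) (y - xs t.+1)) + (Lt t.+1 - Lt t) * d y.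
Proof. by rewrite /model big_ord_recr /=; ring. Qed.

Lemma model_sub t y z : model t y - model t z =
  sprod (\sum_(k < t.+1) gamma k *: g (xs k)) (y - z) + Lt t * (d y - d z).
Proof.
rewrite /model sprod_suml opprD addrACA -sumrB -mulrBr; congr (_ + _).
apply: eq_bigr => k _; rewrite sprodZl -mulrBr opprD addrACA subrr add0r -sprodBr.
by congr (_ * sprod _ _); rewrite opprB addrA subrK.
Qed.

End Model.

Lemma inf_image_argmin {R : realType} {n : nat} {Q : set 'rV[R]_n} {F : 'rV[R]_n -> R} {p} :
  is_argmin Q F p -> inf [set F x | x in Q] = F p.
Proof.
move=> [Qp pmin]; apply/le_anti/andP; split.
  by apply: ge_inf; [exists (F p) => _ [x Qx <-]; exact: pmin | exists p].
by apply: lb_le_inf; [exists (F p), p | move=> _ [x Qx <-]; exact: pmin].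
Qed.

(* [ga ^+ 2 <= G + ga] means [(G + ga) tau^2 <= 1] for [tau = ga / (G + ga)], which absorbs
   the smoothness term since [u' - x = tau (xh - z)]. *)
Lemma coupling_step_le {R : realType} {n : nat} {N f : 'rV[R]_n -> R} {g : 'rV[R]_n -> 'rV[R]_n}
    {G ga Lu : R} {x u z xh u' : 'rV[R]_n} (z' : 'rV[R]_n) :
  is_norm N -> convex_fun f -> is_gradient f g ->
  0 < G -> 0 <= ga -> ga ^+ 2 <= G + ga -> 0 <= Lu ->
  x = (ga / (G + ga)) *: z + (1 - ga / (G + ga)) *: u ->
  u' = (ga / (G + ga)) *: xh + (1 - ga / (G + ga)) *: u ->
  f u' <= f x + sprod (g x) (u' - x) + Lu / 2 * N (u' - x) ^+ 2 ->
  (G + ga) * f u' <= G * f u + ga * (f x + sprod (g x) (z' - x))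
    + ga * (sprod (g x) (xh - z) - sprod (g x) (z' - z)) + Lu / 2 * N (xh - z) ^+ 2.
Proof.
move=> normN cf hg G0 ga0 ga2 Lu0 xE u'E smooth.
have G'0 : 0 < G + ga by rewrite ltr_wpDr.
set tau := ga / (G + ga) in xE u'E.
have tau0 : 0 <= tau by rewrite divr_ge0 // ltW.
have tau2 : (G + ga) * tau ^+ 2 <= 1.
  rewrite (_ : _ * tau ^+ 2 = ga ^+ 2 / (G + ga)); last by rewrite /tau; field; rewrite gt_eqF.
  by rewrite ler_pdivrMr // mul1r.
have u'x : u' - x = tau *: (xh - z) by rewrite xE u'E; apply/rowP => i; rewrite !mxE; ring.
have ux : G *: (u - x) + ga *: (z' - x) = ga *: (z' - z).
  by rewrite xE; apply/rowP => i; rewrite !mxE /tau; field; rewrite gt_eqF.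
have ux' : G * sprod (g x) (u - x) = ga * sprod (g x) (z' - z) - ga * sprod (g x) (z' - x).
  by rewrite -!sprodZr -sprodBr -ux addrK.
have cvx : G * (f x + sprod (g x) (u - x)) <= G * f u.
  by rewrite ler_wpM2l ?(ltW G0) // convex_gradient_le.
have {}smooth : (G + ga) * f u' <= (G + ga) * f x + ga * sprod (g x) (xh - z)
    + Lu / 2 * N (xh - z) ^+ 2.
  move: smooth; rewrite u'x sprodZr (normNZ normN) ger0_norm // exprMn => smooth.
  apply: (le_trans (ler_wpM2l (ltW G'0) smooth)).
  have Gtau : (G + ga) * tau = ga by rewrite /tau mulrC divfK ?gt_eqF.
  rewrite !mulrDr mulrA Gtau lerD2l.
  rewrite (_ : (G + ga) * _ = (G + ga) * tau ^+ 2 * (Lu / 2 * N (xh - z) ^+ 2)); last by ring.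
  by rewrite ler_piMl // mulr_ge0 ?sqr_ge0 // divr_ge0.
move: cvx smooth; rewrite !mulrDl !mulrDr mulrN ux'.
set a := G * f x; set b := ga * f x; set c := ga * sprod _ (z' - x).
set p := ga * sprod _ (z' - z); set q := ga * sprod _ (xh - z); lra.
Qed.

Section Algorithm.
Context {R : realType} {n : nat}.
Local Notation V := 'rV[R]_n.
Context {N : V -> R} {Q : set V} {f : V -> R} {g : V -> V} {L : R}
  {d : V -> R} {d' : V -> V} {T : nat} {gamma Lt : nat -> R} {xs us zs xh : nat -> V}.
Local Notation model := (model f g d gamma xs Lt).
Hypotheses (normN : is_norm N) (closedQ : closed Q) (convexQ : convex_set Q)
  (convex_f : convex_fun f) (grad_f : is_gradient f g) (L_gt0 : 0 < L)
  (lipschitz_g : forall x y, Q x -> Q y -> dual_norm N (g x - g y) <= L * N (x - y))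
  (dgfQ : dgf N Q d d') (gamma0 : 0 < gamma 0%N <= 1)
  (gamma_ge0 : forall t, (t <= T.+1)%N -> 0 <= gamma t)
  (gamma_sqr_le : forall t, (t <= T.+1)%N -> gamma t ^+ 2 <= Gam gamma t)
  (Lt0 : Lt 0%N = L) (x0_argmin : is_argmin Q d (xs 0%N)) (d_x0 : d (xs 0%N) = 0)
  (u0_argmin : is_argmin Q (fun x => gamma 0%N * (f (xs 0%N)
     + sprod (g (xs 0%N)) (x - xs 0%N)) + Lt 0%N * d x) (us 0%N))
  (z0_u0 : zs 0%N = us 0%N)
  (Lt_choice : forall t, (1 <= t <= T)%N -> 0 < Lt t <= L /\
     f (us t) <= f (xs t) + sprod (g (xs t)) (us t - xs t) + Lt t / 2 * N (us t - xs t) ^+ 2)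
  (zs_argmin : forall t, (1 <= t <= T)%N -> is_argmin Q (model t) (zs t))
  (xs_step : forall t, (t <= T)%N -> xs t.+1 = (gamma t.+1 / Gam gamma t.+1) *: zs t
     + (1 - gamma t.+1 / Gam gamma t.+1) *: us t)
  (xh_prox : forall t, (t <= T)%N ->
     is_prox Q d d' (zs t) ((gamma t.+1 / Lt t) *: g (xs t.+1)) (xh t.+1))
  (us_step : forall t, (t <= T)%N -> us t.+1 = (gamma t.+1 / Gam gamma t.+1) *: xh t.+1
     + (1 - gamma t.+1 / Gam gamma t.+1) *: us t).

Lemma Lt_gt0 {t} : (t <= T)%N -> 0 < Lt t.
Proof. by case: t => [|t] tT; [rewrite Lt0 | have [/andP[]] := Lt_choice t.+1 tT]. Qed.

Lemma Gam_gt0 {t} : (t <= T.+1)%N -> 0 < Gam gamma t.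
Proof.
elim: t => [|t IH] tT; first by rewrite /Gam big_ord1; case/andP: gamma0.
by rewrite GamS ltr_wpDr ?gamma_ge0 // IH // ltnW.
Qed.

Lemma zs_model_argmin {t} : (t <= T)%N -> is_argmin Q (model t) (zs t).
Proof.
case: t => [_|t tT]; last exact: zs_argmin.
have [Qu0 u0min] := u0_argmin.
by rewrite z0_u0; split => // x Qx; rewrite /model !big_ord1; exact: u0min.
Qed.

Lemma estimate_base : Gam gamma 0 * f (us 0%N) <= model 0 (zs 0%N).
Proof.
have [Qx0 x0min] := x0_argmin; have [Qu0 _] := u0_argmin.
have := lipschitz_gradient_le normN convexQ convex_f grad_f (ltW L_gt0) lipschitz_g Qx0 Qu0.
have sub0 : subgrad Q d (xs 0%N) 0 by move=> y Qy; rewrite sprod0l addr0; exact: x0min.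
have [_ [_ [sc _]]] := dgfQ.
have := subgrad_strongly_convex_le convexQ sc Qx0 sub0 Qu0.
rewrite z0_u0 /Gam /model !big_ord1 Lt0 d_x0 sprod0l !add0r.
set S := sprod _ _; set M := N _ ^+ 2 => dM smooth; case/andP: gamma0 => g0 g1.
have M0 : 0 <= M by rewrite sqr_ge0.
have h1 : gamma 0%N * f (us 0%N) <= gamma 0%N * (f (xs 0%N) + S) + gamma 0%N * (L / 2 * M).
  by rewrite -mulrDr ler_wpM2l // ltW.
have h2 : gamma 0%N * (L / 2 * M) <= L / 2 * M.
  by rewrite ler_piMl // mulr_ge0 // divr_ge0 // ltW.
have h3 : L / 2 * M <= L * d (us 0%N) by rewrite -mulrA ler_wpM2l // ltW.
move: h1 h2 h3; set a := gamma 0%N * _; set b := gamma 0%N * (L / 2 * M); lra.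
Qed.

Lemma estimate_step t (S : R) : (t < T)%N ->
  Gam gamma t * f (us t) + S <= model t (zs t) ->
  Gam gamma t.+1 * f (us t.+1)
    + (S + (Lt t.+1 - Lt t) * (d (zs t.+1) - 2^-1 * N (zs t - xh t.+1) ^+ 2))
  <= model t.+1 (zs t.+1).
Proof.
move=> tT IH; have tT' := ltnW tT; have [_ [_ [sc _]]] := dgfQ.
have [/andP[Lt1 _] smooth] := Lt_choice t.+1 tT.
have zmin := zs_model_argmin tT'; have Qz' := (zs_model_argmin tT).1.
have modelE y := model_sub f g d gamma xs Lt t y (zs t).
have three := argmin_bregman_le closedQ convexQ dgfQ (Lt_gt0 tT') modelE zmin Qz'.
have Qoz : Qo Q d (zs t).
  by split; [exact: zmin.1 | eexists; exact: argmin_subgrad (Lt_gt0 tT') modelE zmin].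
have sz := dgf_selection_subgrad dgfQ Qoz.
have [Qxh xhmin] := xh_prox _ tT'.
have breg := bregman_ge_half_sqr convexQ sc zmin.1 sz Qxh.
have := xhmin _ Qz'; rewrite !sprodZl => prox.
have gsq : gamma t.+1 ^+ 2 <= Gam gamma t + gamma t.+1 by rewrite -GamS gamma_sqr_le.
have xE := xs_step _ tT'; have u'E := us_step _ tT'; rewrite GamS in xE u'E.
have := coupling_step_le (zs t.+1) normN convex_f grad_f (Gam_gt0 (leqW tT'))
  (gamma_ge0 _ (leqW tT)) gsq (ltW Lt1) xE u'E smooth.
rewrite -GamS => step.
rewrite modelS (normN_distC normN).
set ga := gamma t.+1 in prox step *; set gx := g (xs t.+1) in prox step *.
set p := sprod gx (xh t.+1 - zs t) in prox step; set q := sprod gx (zs t.+1 - zs t) in prox step.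
have {}prox : ga * p - ga * q + Lt t * bregman d d' (zs t) (xh t.+1)
    <= Lt t * bregman d d' (zs t) (zs t.+1).
  move: prox; set B1 := bregman _ _ _ (xh t.+1); set B2 := bregman _ _ _ (zs t.+1).
  move=> /(ler_wpM2l (ltW (Lt_gt0 tT'))); rewrite !mulrDr !mulrA.
  rewrite (_ : Lt t * ga / Lt t = ga); last by field; exact: lt0r_neq0 (Lt_gt0 tT').
  set a1 := ga * p; set a2 := ga * q; set b1 := Lt t * B1; set b2 := Lt t * B2; lra.
have {}breg := ler_wpM2l (ltW (Lt_gt0 tT')) breg.
move: IH three step prox breg; set A := Gam gamma t * _; set B := _ * f (us t.+1).
set C := ga * (f _ + _); set M := model t (zs t); set M' := model t (zs t.+1).
set E := N _ ^+ 2; set D := d (zs t.+1).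
set b1 := Lt t * bregman _ _ _ (xh t.+1); set b2 := Lt t * bregman _ _ _ (zs t.+1).
rewrite [ga * _]mulrBr [(_ - _) * (D - _)]mulrBr [(_ - _) * (2^-1 * E)]mulrBl -[_ / 2 * E]mulrA.
set a1 := ga * p; set a2 := ga * q; set Y1 := Lt t.+1 * _; set Y2 := Lt t * (2^-1 * E).
set Y3 := _ * D; lra.
Qed.

Lemma estimate_sequence t : (t <= T)%N ->
  Gam gamma t * f (us t)
    + \sum_(k < t) (Lt k.+1 - Lt k) * (d (zs k.+1) - 2^-1 * N (zs k - xh k.+1) ^+ 2)
  <= psi Q f g d gamma xs Lt t.
Proof.
move=> tT; rewrite /psi (inf_image_argmin (zs_model_argmin tT)).
elim: t tT => [|t IH] tT; first by rewrite big_ord0 addr0; exact: estimate_base.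
by rewrite big_ord_recr /=; apply: estimate_step => //; apply: IH; exact: ltnW.
Qed.

End Algorithm.

Theorem theorem1 (R : realType) (n : nat) (N : 'rV[R]_n -> R)
  (Q : set 'rV[R]_n) (f : 'rV[R]_n -> R) (g : 'rV[R]_n -> 'rV[R]_n) (L : R)
  (d : 'rV[R]_n -> R) (d' : 'rV[R]_n -> 'rV[R]_n)
  (T : nat) (gamma : nat -> R) (Lt : nat -> R)
  (xs us zs xh : nat -> 'rV[R]_n) :
  is_norm N ->
  closed Q -> convex_set Q ->
  convex_fun f -> is_gradient f g ->
  (exists xstar, is_argmin Q f xstar) ->
  0 < L ->
  (forall x y, Q x -> Q y -> dual_norm N (g x - g y) <= L * N (x - y)) ->
  dgf N Q d d' ->
  0 < gamma 0%N <= 1 ->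
  (forall t, (t <= T.+1)%N -> 0 <= gamma t) ->
  (forall t, (t <= T.+1)%N -> gamma t ^+ 2 <= Gam gamma t) ->
  Lt 0%N = L ->
  is_argmin Q d (xs 0%N) -> d (xs 0%N) = 0 ->
  is_argmin Q (fun x => gamma 0%N * (f (xs 0%N) + sprod (g (xs 0%N)) (x - xs 0%N))
                         + Lt 0%N * d x) (us 0%N) ->
  zs 0%N = us 0%N ->
  (forall t, (1 <= t <= T)%N ->
     0 < Lt t <= L /\
     f (us t) <= f (xs t) + sprod (g (xs t)) (us t - xs t)
                 + Lt t / 2 * N (us t - xs t) ^+ 2) ->
  (forall t, (1 <= t <= T)%N -> is_argmin Q (model f g d gamma xs Lt t) (zs t)) ->
  (forall t, (t <= T)%N ->
     xs t.+1 = (gamma t.+1 / Gam gamma t.+1) *: zs t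
               + (1 - gamma t.+1 / Gam gamma t.+1) *: us t) ->
  (forall t, (t <= T)%N ->
     is_prox Q d d' (zs t) ((gamma t.+1 / Lt t) *: g (xs t.+1)) (xh t.+1)) ->
  (forall t, (t <= T)%N ->
     us t.+1 = (gamma t.+1 / Gam gamma t.+1) *: xh t.+1
               + (1 - gamma t.+1 / Gam gamma t.+1) *: us t) ->
  forall t, (t <= T)%N ->
    Gam gamma t * f (us t)
    + \sum_(k < t) (Lt k.+1 - Lt k) * (d (zs k.+1) - 2^-1 * N (zs k - xh k.+1) ^+ 2)
    <= psi Q f g d gamma xs Lt t.
Proof.
move=> normN closedQ convexQ convex_f grad_f _ L_gt0 lipschitz_g dgfQ gamma0 gamma_ge0
  gamma_sqr_le Lt0 x0_argmin d_x0 u0_argmin z0_u0 Lt_choice zs_argmin xs_step xh_prox us_step.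
exact: (estimate_sequence normN closedQ convexQ convex_f grad_f L_gt0 lipschitz_g dgfQ
  gamma0 gamma_ge0 gamma_sqr_le Lt0 x0_argmin d_x0 u0_argmin z0_u0 Lt_choice zs_argmin
  xs_step xh_prox us_step).
Qed.
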